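(* For $k\ge 2$ let $f_k(x)=\sum_{n\ge 0}|S_n(123,\,k(k-1)\cdots 21(k+1))|\,x^n$ (the $n=0$ term being $1$). Then $f_2(x)=\frac{1-x}{1-2x}$ and, for every $k\ge 3$, $$f_k(x)=\frac{1}{1-x\,f_{k-1}(x)}.$$ In particular $f_3(x)=\frac{1-2x}{1-3x+x^2}$, so $|S_n(123,3214)|$ is the sequence $1,1,2,5,13,34,89,\dots$ (defined by $\bar F_0=\bar F_1=1$, $\bar F_2=2$, $\bar F_n=3\bar F_{n-1}-\bar F_{n-2}$ for $n\ge 3$). *)

From mathcomp Require Import all_boot all_order all_algebra all_fingroup.
Set Implicit Arguments. Unset Strict Implicit. Unset Printing Implicit Defensive.
Import Order.TTheory GRing.Theory Num.Theory.

Definition contains (n : nat) (s : 'S_n) (p : seq nat) : bool :=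
  [exists f : {ffun 'I_(size p) -> 'I_n},
     [forall a : 'I_(size p), forall b : 'I_(size p),
        ((a < b)%N ==> (f a < f b)%N) &&
        (((s (f a) : nat) < s (f b))%N == (nth 0 p a < nth 0 p b)%N)]].

Definition avoids (n : nat) (s : 'S_n) (p : seq nat) : bool := ~~ contains s p.

Definition tau (k : nat) : seq nat := rcons (rev (iota 1 k)) k.+1.

Definition pat123 : seq nat := [:: 1; 2; 3].

Definition av (k n : nat) : nat :=
  #|[set s : 'S_n | avoids s pat123 && avoids s (tau k)]|.

Definition fps := nat -> int.
Local Open Scope ring_scope.
Definition fps_const (c : int) : fps := fun n => if n is 0 then c else 0.
Definition fps_X : fps := fun n => if n == 1%N then 1 else 0.
Definition fps_add (f g : fps) : fps := fun n => f n + g n.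
Definition fps_sub (f g : fps) : fps := fun n => f n - g n.
Definition fps_scale (c : int) (f : fps) : fps := fun n => c * f n.
Definition fps_mul (f g : fps) : fps :=
  fun n => \sum_(i < n.+1) f i * g (n - i)%N.

Definition gf (k : nat) : fps := fun n => (av k n)%:Z.

(* Work with the one-line word of a permutation. It avoids 123 and
   k(k-1)...1(k+1) iff it avoids 123 and no entry is preceded by k smaller
   entries: by 123-avoidance the smaller entries before a given entry
   decrease, so k of them followed by that entry form the pattern.
   Building words by inserting the maximum n, it may go to position p exactly
   when p <= min(d, k-1), where d is the length of the initial nonincreasing
   run; the new run length is d+1 for p = 0 and p otherwise. Labelling a word
   by min(d, k) gives the generating tree (c) -> (1)(2)...(min(c+1, k)).
   Cutting each path at its first visit to label 1, and observing that the
   paths avoiding label 1 form the tree for k-1 with labels shifted by one,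
   gives f_k = 1 + x f_k f_(k-1); for k = 2 the tree is binary below the
   root. *)

From mathcomp Require Import all_boot all_order all_algebra all_fingroup.
From mathcomp Require Import zify.
From Stdlib Require Import FunctionalExtensionality.
Set Implicit Arguments. Unset Strict Implicit. Unset Printing Implicit Defensive.

Fixpoint no123 (w : seq nat) : bool :=
  if w is x :: t then pairwise (fun a b => ~~ ((x < a) && (a < b))) t && no123 t
  else true.

(* [pre] holds the entries already read, so [few_smaller k w] says that no
   entry of [w] is preceded by [k] or more smaller entries. *)
Fixpoint few_smaller_from (k : nat) (pre w : seq nat) : bool :=
  if w is x :: t then (count (fun y => y < x) pre < k) && few_smaller_from k (x :: pre) t
  else true.

Definition few_smaller k w := few_smaller_from k [::] w.

Definition nonincr (s : seq nat) := pairwise (fun a b => b <= a) s.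

Fixpoint nonincr_run (w : seq nat) : nat :=
  if w is x :: t then
    (if t is y :: _ then (if y <= x then nonincr_run t else 0) else 0).+1
  else 0.

Definition insert_at (p n : nat) (w : seq nat) := take p w ++ n :: drop p w.

Section InsertMax.

Variable n : nat.

Let below (w : seq nat) := all (fun y => y < n) w.

Lemma pairwise_insert_max x p t : below t ->
  pairwise (fun a b => ~~ ((x < a) && (a < b))) (insert_at p n t) =
  all (fun a => a <= x) (take p t) &&
  pairwise (fun a b => ~~ ((x < a) && (a < b))) t.
Proof.
move=> /allP tn; set R := fun a b => ~~ ((x < a) && (a < b)).
rewrite /insert_at -[pairwise R t](congr1 (pairwise R) (cat_take_drop p t)).
rewrite !pairwise_cat allrel_consr /=.
have -> : all (fun a => ~~ ((x < a) && (a < n))) (take p t) =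
          all (fun a => a <= x) (take p t).
  by apply: eq_in_all => a /mem_take /tn an; rewrite an andbT -leqNgt.
have -> : all (fun b => ~~ ((x < n) && (n < b))) (drop p t).
  by apply/allP => b /mem_drop /tn bn; rewrite [n < b]ltnNge (ltnW bn) andbF.
by case: (all _ _); case: (allrel _ _ _); case: (pairwise _ (take _ _)).
Qed.

Lemma no123_insert_max p w : below w ->
  no123 (insert_at p n w) = no123 w && nonincr (take p w).
Proof.
rewrite /insert_at; elim: w p => [|x t IH] [|p] //= /andP[xn tn].
- have -> : all (fun b => ~~ ((n < x) && (x < b))) t.
    by apply/allP => b _; rewrite [n < x]ltnNge (ltnW xn).
  suff -> : pairwise (fun a b => ~~ ((n < a) && (a < b))) t by rewrite /= andbT.
  apply/(pairwiseP 0) => i j Hi _ _; rewrite [n < _]ltnNge ltnW //.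
  by apply: (allP tn); apply: mem_nth.
- rewrite (pairwise_insert_max x p tn) IH // /nonincr /=.
  by case: (all _ _); case: (pairwise _ t); case: (no123 t); case: (pairwise _ (take _ _)).
Qed.

Lemma nonincr_take w p : p <= size w -> nonincr (take p w) = (p <= nonincr_run w).
Proof.
elim: w p => [|x t IH] [|p] // Hp.
rewrite [take _ _]/= /nonincr pairwise_cons -/(nonincr _) [nonincr_run _]/= ltnS.
case: t IH Hp => [|y t'] IH Hp.
  by move: Hp => /=; rewrite ltnS leqn0 => /eqP ->.
case: ifP => yx; last by case: p Hp => [|p] Hp //; rewrite [take p.+1 _]/= /= yx.
rewrite -IH //; case: p Hp => [|p] Hp //.
rewrite [take p.+1 _]/= /nonincr !pairwise_cons /= yx /=.
case Hy: (all (leq^~ y) _); rewrite ?andbF ?andbT //=.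
by rewrite (sub_all _ Hy) // => b /leq_trans; apply.
Qed.

Lemma nonincr_run_size w : nonincr_run w <= size w.
Proof. by elim: w => //= x [|y t] //= IH; case: ifP. Qed.

Lemma nonincr_run_insert_max p w : below w -> p <= size w -> p <= nonincr_run w ->
  nonincr_run (insert_at p n w) = if p == 0 then (nonincr_run w).+1 else p.
Proof.
rewrite /insert_at; case: p => [|p] /=.
  by case: w => //= y t /andP[yn _] _ _; rewrite (ltnW yn).
elim: w p => [|x t IH] p //= /andP[xn tn] Hp Hd.
case: p Hp Hd IH => [|p] Hp Hd IH /=; first by rewrite take0 drop0 /= leqNgt xn.
case: t Hp Hd IH tn => [|y t'] // Hp Hd IH tn.
move: Hd; rewrite [nonincr_run _]/= ltnS; case: ifP => // yx Hd.
by have := IH p tn Hp Hd; rewrite [take _ _]/= [drop _ _]/= /= yx => ->.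
Qed.

Lemma few_smaller_from_count k pre pre' t :
  (forall x, x \in t -> count (fun y => y < x) pre = count (fun y => y < x) pre') ->
  few_smaller_from k pre t = few_smaller_from k pre' t.
Proof.
elim: t pre pre' => //= x t IH pre pre' H.
rewrite H ?mem_head //; congr (_ && _); apply: IH => y yt /=.
by rewrite H // inE yt orbT.
Qed.

Lemma few_smaller_from_insert_max k p w pre : below w -> below pre ->
  few_smaller_from k pre (insert_at p n w) =
  few_smaller_from k pre w && (size pre + minn p (size w) < k).
Proof.
have count_below s : below s -> count (fun y => y < n) s = size s.
  by move=> H; apply/eqP; rewrite -all_count.
rewrite /insert_at; elim: w p pre => [|x t IH] p pre /= Hw Hpre.
  by rewrite count_below // andbT minn0 addn0.
move: Hw => /andP[xn tn]; case: p => [|p].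
  rewrite take0 drop0 [few_smaller_from _ _ (n :: _)]/= count_below // min0n addn0.
  rewrite [n < x]ltnNge (ltnW xn) /= (@few_smaller_from_count k [:: x, n & pre] (x :: pre)).
    by case: (size pre < k); case: (_ < k); case: (few_smaller_from _ _ _).
  by move=> y /(allP tn) yn /=; rewrite [n < y]ltnNge (ltnW yn).
rewrite [take _ _]/= [drop _ _]/= cat_cons [few_smaller_from _ _ (x :: _)]/= IH //=.
  by rewrite minnSS addSn addnS; case: (_ < k); case: (few_smaller_from _ _ _).
by rewrite Hpre andbT.
Qed.

End InsertMax.

Lemma index_insert_at n p w : n \notin w -> p <= size w -> index n (insert_at p n w) = p.
Proof.
move=> nw pw; rewrite /insert_at index_cat.
have -> : (n \in take p w) = false by apply/negP => /mem_take; apply/negP.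
by rewrite /= eqxx addn0 size_takel.
Qed.

Lemma rem_insert_at n p w : n \notin w -> rem n (insert_at p n w) = w.
Proof.
move=> nw; rewrite /insert_at -[in RHS](cat_take_drop p w).
have : n \notin take p w by apply: contra nw; apply: mem_take.
elim: (take p w) => /= [|y u IH]; first by rewrite eqxx.
by rewrite inE negb_or eq_sym => /andP[/negbTE -> /IH ->].
Qed.

Lemma insert_at_index_rem n w : n \in w -> w = insert_at (index n w) n (rem n w).
Proof.
rewrite /insert_at; elim: w => //= y w IH; rewrite inE.
by case: (eqVneq y n) => [->|ny] /= H; rewrite ?take0 ?drop0 // -IH.
Qed.

Lemma insert_at_inj n p1 p2 w1 w2 : n \notin w1 -> n \notin w2 ->
  p1 <= size w1 -> p2 <= size w2 ->
  insert_at p1 n w1 = insert_at p2 n w2 -> p1 = p2 /\ w1 = w2.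
Proof.
move=> n1 n2 q1 q2 E; split; first by rewrite -(index_insert_at n1 q1) E index_insert_at.
by rewrite -(rem_insert_at p1 n1) E rem_insert_at.
Qed.

Definition perm_words n := permutations (iota 0 n).

Lemma perm_words_props n w : w \in perm_words n ->
  [/\ all (fun y => y < n) w, size w = n & uniq w].
Proof.
rewrite mem_permutations => H; split.
- by apply/allP => y; rewrite (perm_mem H) mem_iota.
- by rewrite (perm_size H) size_iota.
- by rewrite (perm_uniq H) iota_uniq.
Qed.

Lemma perm_words_insert_max n :
  perm_eq (perm_words n.+1) [seq insert_at p n w | w <- perm_words n, p <- iota 0 n.+1].
Proof.
have max_notin w : w \in perm_words n -> n \notin w.
  by case/perm_words_props => /allP aw _ _; apply/negP => /aw; rewrite ltnn.
apply: uniq_perm; first exact: permutations_uniq.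
  apply: allpairs_uniq; [exact: permutations_uniq | exact: iota_uniq |].
  move=> [w1 p1] [w2 p2] H1 H2 /= E.
  case/allpairsP: H1 => [[v1 q1] [Hw1 Hp1 [E1 E2]]]; subst v1 q1.
  case/allpairsP: H2 => [[v2 q2] [Hw2 Hp2 [E1 E2]]]; subst v2 q2.
  rewrite !mem_iota in Hp1 Hp2; move: Hw1 Hw2 Hp1 Hp2 E => /= Hw1 Hw2 Hp1 Hp2 E.
  have [_ s1 _] := perm_words_props Hw1; have [_ s2 _] := perm_words_props Hw2.
  have q1 : p1 <= size w1 by rewrite s1 -ltnS.
  have q2 : p2 <= size w2 by rewrite s2 -ltnS.
  by have [-> ->] := @insert_at_inj n p1 p2 w1 w2 (max_notin _ Hw1) (max_notin _ Hw2) q1 q2 E.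
have iota_max : perm_eq (iota 0 n.+1) (n :: iota 0 n).
  by rewrite -addn1 iotaD add0n perm_catC.
move=> x; apply/idP/allpairsP.
  rewrite mem_permutations => H.
  have nx : n \in x by rewrite (perm_mem H) mem_iota add0n ltnSn.
  exists (rem n x, index n x); split; last exact: insert_at_index_rem.
    rewrite mem_permutations -(perm_cons n).
    by apply: perm_trans (perm_trans H iota_max); rewrite perm_sym perm_to_rem.
  by rewrite mem_iota add0n /= -(size_iota 0 n.+1) -(perm_size H) index_mem.
move=> [[w p] [/= Hw _ ->]].
rewrite mem_permutations /insert_at.
apply: (@perm_trans _ (n :: iota 0 n)); last by rewrite perm_sym.
by rewrite -cat1s perm_catCA /= perm_cons cat_take_drop -mem_permutations.
Qed.

Definition good k w := no123 w && few_smaller k w.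

Definition label k w := minn (nonincr_run w) k.

Fixpoint gtree (k n c : nat) : nat :=
  if n is m.+1 then \sum_(i < minn c.+1 k) gtree k m i.+1 else 1.

Lemma good_insert_max k n p w : w \in perm_words n -> p <= n ->
  good k (insert_at p n w) = [&& good k w, p <= nonincr_run w & p < k].
Proof.
move=> Hw Hp; have [aw sw _] := perm_words_props Hw.
rewrite /good no123_insert_max // /few_smaller few_smaller_from_insert_max //.
rewrite add0n (minn_idPl _) ?sw // nonincr_take ?sw //.
by case: (no123 w); case: (few_smaller_from _ _ _); case: (_ <= _); case: (_ < _).
Qed.

Lemma label_insert_max k n p w : w \in perm_words n ->
  p <= nonincr_run w -> p < k ->
  label k (insert_at p n w) = if p == 0 then minn (nonincr_run w).+1 k else p.
Proof.
move=> Hw pd pk; have [aw sw _] := perm_words_props Hw.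
have pw : p <= size w by apply: leq_trans pd (nonincr_run_size w).
by rewrite /label nonincr_run_insert_max //; case: eqP => // _; apply/minn_idPl/ltnW.
Qed.

Lemma sum_children k n (F : nat -> nat) w : 0 < k ->
  w \in perm_words n -> good k w ->
  \sum_(p <- iota 0 n.+1 | good k (insert_at p n w)) F (label k (insert_at p n w))
  = \sum_(i < minn (label k w).+1 k) F i.+1.
Proof.
move=> k0 Hw Gw; have [_ sw _] := perm_words_props Hw.
have dn := nonincr_run_size w; rewrite sw in dn.
set d := nonincr_run w in dn *; set m := minn d k.-1.
have -> : minn (label k w).+1 k = m.+1 by rewrite /label -/d /m; lia.
transitivity (\sum_(0 <= p < n.+1 | p < m.+1) F (if p == 0 then m.+1 else p)).
  rewrite big_seq_cond [RHS]big_seq_cond; apply: eq_big => [p|p].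
    rewrite mem_iota /= add0n; case: ltnP => //= pn.
    by rewrite good_insert_max // Gw /= -/d /m ltnS leq_min -[p <= k.-1]ltnS prednK.
  rewrite mem_iota /= add0n => /andP[pn]; rewrite good_insert_max // => /and3P[_ pd pk].
  rewrite label_insert_max // -/d; congr F; congr (if _ then _ else _); rewrite /m; lia.
have -> : \sum_(0 <= p < n.+1 | p < m.+1) F (if p == 0 then m.+1 else p)
          = \sum_(0 <= p < m.+1) F (if p == 0 then m.+1 else p).
  by rewrite (big_nat_widen 0 m.+1 n.+1) // /m; lia.
by rewrite big_mkord big_ord_recl [RHS]big_ord_recr /= addnC.
Qed.

Lemma sum_good_perm_words_succ k n (F : nat -> nat) : 0 < k ->
  \sum_(w <- perm_words n.+1 | good k w) F (label k w) =
  \sum_(w <- perm_words n | good k w) \sum_(i < minn (label k w).+1 k) F i.+1.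
Proof.
move=> k0; rewrite big_mkcond (perm_big _ (perm_words_insert_max n)) big_allpairs_dep.
rewrite [RHS]big_mkcond; apply: eq_big_seq => w Hw; rewrite -big_mkcond.
case Gw: (good k w); first exact: sum_children.
rewrite big1_seq // => p /andP[+ /[!mem_iota] /andP[_ pn]].
by rewrite good_insert_max // Gw.
Qed.

Lemma sum_gtree_labels k n m : 0 < k ->
  \sum_(w <- perm_words n | good k w) gtree k m (label k w) = gtree k (n + m) 0.
Proof.
move=> k0; elim: n m => [|n IH] m.
  by rewrite /perm_words /= big_cons big_nil /good /= /label /= min0n addn0.
by rewrite sum_good_perm_words_succ // addSnnS -IH.
Qed.

Lemma count_good_perm_words k n : 0 < k -> count (good k) (perm_words n) = gtree k n 0.
Proof.
move=> k0; have := sum_gtree_labels n 0 k0; rewrite addn0 => <-.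
by rewrite -sum1_count.
Qed.

Definition smaller_before (w : seq nat) (l : nat) :=
  count (fun i => nth 0 w i < nth 0 w l) (iota 0 l).

Lemma few_smaller_fromE k pre w : few_smaller_from k pre w =
  all (fun l => count (fun y => y < nth 0 w l) pre + smaller_before w l < k)
      (iota 0 (size w)).
Proof.
elim: w pre => //= x t IH pre; rewrite IH /smaller_before addn0; congr (_ && _).
rewrite (iotaDl 1 0) all_map; apply: eq_all => l /=.
by rewrite (iotaDl 1 0) count_map /= addnCA addnA.
Qed.

Lemma few_smallerE k w :
  few_smaller k w = all (fun l => smaller_before w l < k) (iota 0 (size w)).
Proof. by rewrite /few_smaller few_smaller_fromE. Qed.

Lemma no123_nth w i j l : no123 w -> i < j -> j < l -> l < size w ->
  ~~ ((nth 0 w i < nth 0 w j) && (nth 0 w j < nth 0 w l)).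
Proof.
elim: w i j l => //= x t IH [|i] [|j] [|l] //= /andP[/(pairwiseP 0) Hp Hn] ij jl ls.
  by apply: Hp; rewrite ?unfold_in /=; lia.
exact: IH.
Qed.

Lemma nth_no123 w : (forall i j l, i < j -> j < l -> l < size w ->
  ~~ ((nth 0 w i < nth 0 w j) && (nth 0 w j < nth 0 w l))) -> no123 w.
Proof.
elim: w => //= x t IH H; apply/andP; split.
  by apply/(pairwiseP 0) => j l Hj Hl jl; apply: (H 0 j.+1 l.+1).
by apply: IH => i j l ij jl ls; apply: (H i.+1 j.+1 l.+1).
Qed.

Lemma no123_smaller_before_dec w i j l : uniq w -> no123 w ->
  i < j -> j < l -> l < size w ->
  nth 0 w i < nth 0 w l -> nth 0 w j < nth 0 w l -> nth 0 w j < nth 0 w i.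
Proof.
move=> uw nw ij jl ls _ jw; have := no123_nth nw ij jl ls.
rewrite jw andbT -leqNgt leq_eqVlt => /orP[/eqP|//].
by move/(congr1 (index^~ w)); rewrite !index_uniq; lia.
Qed.

Definition word_contains (w p : seq nat) : Prop :=
  exists g : nat -> nat, (forall a, a < size p -> g a < size w) /\
   (forall a b, a < size p -> b < size p ->
     (a < b -> g a < g b) /\
     ((nth 0 w (g a) < nth 0 w (g b)) = (nth 0 p a < nth 0 p b))).

Lemma word_contains_123 w : word_contains w pat123 -> ~~ no123 w.
Proof.
move=> [g [Hg H]]; apply/negP => /no123_nth N.
have [lt01 E01] := H 0 1 erefl erefl; have [lt12 E12] := H 1 2 erefl erefl.
by move: (N _ _ _ (lt01 erefl) (lt12 erefl) (Hg 2 erefl)); rewrite E01 E12.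
Qed.

Lemma increasing_triple_contains_123 w i j l : i < j -> j < l -> l < size w ->
  nth 0 w i < nth 0 w j -> nth 0 w j < nth 0 w l -> word_contains w pat123.
Proof.
move=> ij jl ls wij wjl; exists (nth 0 [:: i; j; l]); split.
  by move=> [|[|[|a]]] //= _; lia.
by move=> [|[|[|a]]] [|[|[|b]]] //= _ _; split => //; lia.
Qed.

Lemma size_tau k : size (tau k) = k.+1.
Proof. by rewrite /tau size_rcons size_rev size_iota. Qed.

Lemma nth_tau k a : a < k -> nth 0 (tau k) a = k - a.
Proof.
move=> ak; rewrite /tau nth_rcons size_rev size_iota ak nth_rev ?size_iota //.
by rewrite nth_iota; lia.
Qed.

Lemma nth_tau_last k : nth 0 (tau k) k = k.+1.
Proof. by rewrite /tau nth_rcons size_rev size_iota ltnn eqxx. Qed.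

Lemma word_contains_tau k w : word_contains w (tau k) -> ~~ few_smaller k w.
Proof.
move=> [g [Hg H]]; rewrite size_tau in Hg H.
rewrite few_smallerE -has_predC; apply/hasP; exists (g k).
  by rewrite mem_iota /= Hg.
have before a : a < k -> g a < g k /\ nth 0 w (g a) < nth 0 w (g k).
  move=> ak; have [gl E] := H a k (ltnW ak) (ltnSn k).
  by rewrite E nth_tau // nth_tau_last; split; [apply: gl | lia].
have g_inj : {in iota 0 k &, injective g}.
  move=> a b; rewrite !mem_iota /= add0n => ak bk E; case: (ltngtP a b) => // ab.
    by have := (H a b (leqW ak) (leqW bk)).1 ab; rewrite E ltnn.
  by have := (H b a (leqW bk) (leqW ak)).1 ab; rewrite E ltnn.
have uniq_g : uniq (map g (iota 0 k)) by rewrite map_inj_in_uniq ?iota_uniq.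
have sub : {subset map g (iota 0 k) <=
            filter (fun i => nth 0 w i < nth 0 w (g k)) (iota 0 (g k))}.
  move=> x /mapP[a]; rewrite mem_iota /= add0n => ak ->; have [gl lw] := before a ak.
  by rewrite mem_filter lw mem_iota.
rewrite /= -leqNgt /smaller_before -size_filter.
by have := uniq_leq_size uniq_g sub; rewrite size_map size_iota.
Qed.

Lemma smaller_before_contains_tau k w l : uniq w -> no123 w ->
  l < size w -> k <= smaller_before w l -> word_contains w (tau k).
Proof.
move=> uw nw ls Hk.
set pos := filter (fun i => nth 0 w i < nth 0 w l) (iota 0 l).
have pos_size : k <= size pos by rewrite size_filter.
have pos_lt a : a < size pos -> nth 0 pos a < l /\ nth 0 w (nth 0 pos a) < nth 0 w l.
  by move=> /(mem_nth 0); rewrite mem_filter mem_iota /= => /andP[-> ->].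
have pos_sorted : sorted ltn pos.
  by apply: sorted_filter; [exact: ltn_trans | exact: iota_ltn_sorted].
have pos_incr a b : a < b -> b < size pos -> nth 0 pos a < nth 0 pos b.
  by move=> ab bs; apply: (sorted_ltn_nth ltn_trans 0 pos_sorted); rewrite ?inE //; lia.
have pos_values a b : a < size pos -> b < size pos ->
    (nth 0 w (nth 0 pos a) < nth 0 w (nth 0 pos b)) = (b < a).
  move=> aS bS; have [A1 A2] := pos_lt a aS; have [B1 B2] := pos_lt b bS.
  case: (ltngtP a b) => [ab|ba|->]; last by rewrite ltnn.
    apply/negbTE; rewrite -leqNgt ltnW //.
    exact: no123_smaller_before_dec (pos_incr _ _ ab bS) B1 ls A2 B2.
  exact: no123_smaller_before_dec (pos_incr _ _ ba aS) A1 ls B2 A2.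
exists (fun a => if a < k then nth 0 pos a else l); rewrite size_tau; split.
  move=> a _; case: ifP => ak //.
  by have [pl _] := pos_lt a (leq_trans ak pos_size); apply: ltn_trans pl ls.
move=> a b Ha Hb.
have [->|ak] : a = k \/ a < k by lia.
  have [->|bk] : b = k \/ b < k by lia.
    by rewrite !ltnn.
  have [B1 B2] := pos_lt b (leq_trans bk pos_size).
  rewrite ltnn bk nth_tau_last nth_tau // [nth 0 w l < _]ltnNge (ltnW B2); split; lia.
have [A1 A2] := pos_lt a (leq_trans ak pos_size).
have [->|bk] : b = k \/ b < k by lia.
  by rewrite ak ltnn nth_tau_last nth_tau // A2; split; lia.
rewrite ak bk !nth_tau // pos_values ?(leq_trans _ pos_size) //.
by split; [move=> ab; exact: pos_incr ab (leq_trans bk pos_size) | lia].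
Qed.

Definition word_of n (s : 'S_n) : seq nat := [seq val (s i) | i <- enum 'I_n].

Lemma size_word_of n (s : 'S_n) : size (word_of s) = n.
Proof. by rewrite size_map size_enum_ord. Qed.

Lemma nth_word_of n (s : 'S_n) (i : 'I_n) : nth 0 (word_of s) i = s i.
Proof. by rewrite (nth_map i) ?size_enum_ord // nth_ord_enum. Qed.

Lemma uniq_word_of n (s : 'S_n) : uniq (word_of s).
Proof. by rewrite map_inj_uniq ?enum_uniq // => i j /val_inj /perm_inj. Qed.

Lemma word_of_inj n : injective (@word_of n).
Proof.
move=> s t E; apply/permP => i; apply: val_inj.
by have := congr1 (nth 0^~ i) E; rewrite /= !nth_word_of.
Qed.

Lemma contains_word_of n (s : 'S_n) p : contains s p <-> word_contains (word_of s) p.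
Proof.
split.
  move=> /existsP[f /forallP H].
  exists (fun a => if insub a is Some a' then val (f a') else 0).
  have gE a (Ha : a < size p) :
      (if insub a is Some a' then val (f a') else 0) = f (Ordinal Ha).
    by rewrite insubT.
  split=> [a Ha|a b Ha Hb]; rewrite !gE ?size_word_of // !nth_word_of.
  by have /forallP/(_ (Ordinal Hb))/andP[/implyP ab /eqP E] := H (Ordinal Ha).
move=> [g [Hg H]].
have Hg' (a : 'I_(size p)) : g a < n by rewrite -(size_word_of s) Hg.
apply/existsP; exists [ffun a => Ordinal (Hg' a)].
apply/forallP => a; apply/forallP => b; rewrite !ffunE /=.
have [ab E] := H a b (ltn_ord a) (ltn_ord b).
rewrite -!(nth_word_of s) /= E eqxx andbT; exact/implyP.
Qed.

Lemma avoids_good k n (s : 'S_n) :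
  avoids s pat123 && avoids s (tau k) = good k (word_of s).
Proof.
set w := word_of s.
have contains123 : contains s pat123 = ~~ no123 w.
  apply/idP/idP => [/contains_word_of/word_contains_123 //|].
  apply: contraNT => N; apply: nth_no123 => i j l ij jl ls.
  apply/negP => /andP[wij wjl]; move/negP: N; apply; apply/contains_word_of.
  exact: increasing_triple_contains_123 wij wjl.
rewrite /avoids /good contains123 negbK; case: (boolP (no123 w)) => //= nw.
have containstau : contains s (tau k) = ~~ few_smaller k w.
  apply/idP/idP => [/contains_word_of/word_contains_tau //|].
  apply: contraNT => N; rewrite few_smallerE; apply/allP => l /[!mem_iota] ls.
  rewrite ltnNge; apply: contra N => Hk; apply/contains_word_of.
  exact: smaller_before_contains_tau (uniq_word_of s) nw ls Hk.
by rewrite containstau negbK.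
Qed.

Lemma perm_eq_word_of n : perm_eq [seq word_of s | s <- enum 'S_n] (perm_words n).
Proof.
apply: uniq_perm; [by rewrite map_inj_uniq ?enum_uniq //; exact: word_of_inj
                  | exact: permutations_uniq |].
move=> w; apply/idP/idP.
  move=> /mapP[s _ ->]; rewrite mem_permutations.
  apply: uniq_perm; [exact: uniq_word_of | exact: iota_uniq |] => y.
  rewrite mem_iota add0n /=; apply/mapP/idP => [[i _ ->]|yn]; first exact: ltn_ord.
  by exists (s^-1 (Ordinal yn))%g; rewrite ?mem_enum ?permKV.
move=> Hw; have [aw sw uw] := perm_words_props Hw.
have Hf (i : 'I_n) : nth 0 w i < n by apply: (allP aw); rewrite mem_nth ?sw.
have f_inj : injective (fun i => Ordinal (Hf i)).
  by move=> i j [] /eqP; rewrite nth_uniq ?sw // => /eqP /val_inj.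
apply/mapP; exists (perm f_inj); first by rewrite mem_enum.
apply: (@eq_from_nth _ 0); first by rewrite size_word_of.
by move=> i; rewrite sw => Hi; rewrite (nth_word_of _ (Ordinal Hi)) permE.
Qed.

Lemma av_gtree k n : 0 < k -> av k n = gtree k n 0.
Proof.
move=> k0; rewrite -count_good_perm_words // /av cardE /enum_mem size_filter.
rewrite -(seq.permP (perm_eq_word_of n)) count_map -enumT.
by apply: eq_count => s; rewrite /= inE avoids_good.
Qed.

(* Descendants reached along paths that avoid label 1. *)
Fixpoint gtree_no1 (k n c : nat) : nat :=
  if n is m.+1 then \sum_(i < minn c.+1 k - 1) gtree_no1 k m i.+2 else 1.

Lemma gtree_no1_shift k n c : 1 < k -> 0 < c -> gtree_no1 k n c = gtree k.-1 n c.-1.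
Proof.
move=> k1; elim: n c => [|n IH] c c0 //=.
have -> : minn c.+1 k - 1 = minn c.-1.+1 k.-1 by lia.
by apply: eq_bigr => i _; rewrite IH.
Qed.

Lemma gtree_succ0 k n : 0 < k -> gtree k n.+1 0 = gtree k n 1.
Proof. by move=> k0 /=; rewrite (minn_idPl k0) big_ord1. Qed.

Lemma gtree_first_return k n c : 0 < k ->
  gtree k n c = gtree_no1 k n c + \sum_(j < n) gtree_no1 k j c * gtree k (n - j.+1) 1.
Proof.
move=> k0; elim: n c => [|n IH] c; first by rewrite big_ord0.
set M := minn c.+1 k - 1; have -> : gtree k n.+1 c = gtree k n 1 + \sum_(i < M) gtree k n i.+2.
  by rewrite /= (_ : minn c.+1 k = M.+1) ?big_ord_recl //; lia.
rewrite [gtree_no1 _ _ _]/= -/M big_ord_recl /= mul1n subSS subn0.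
rewrite (eq_bigr (fun i : 'I_M => gtree_no1 k n i.+2 +
   \sum_(j < n) gtree_no1 k j i.+2 * gtree k (n - j.+1) 1)) => [|i _]; last exact: IH.
rewrite big_split /= addnCA; congr (_ + (_ + _)).
by rewrite exchange_big; apply: eq_bigr => j _; rewrite -/M big_distrl.
Qed.

Lemma gtree_succ_conv k m : 1 < k ->
  gtree k m.+1 0 = \sum_(i < m.+1) gtree k i 0 * gtree k.-1 (m - i) 0.
Proof.
move=> k1; have k0 : 0 < k by lia.
rewrite gtree_succ0 // gtree_first_return // (reindex_inj rev_ord_inj) [RHS]big_ord_recl.
rewrite /= mul1n subn0 gtree_no1_shift //; congr (_ + _); apply: eq_bigr => j _.
rewrite gtree_no1_shift // -gtree_succ0 // mulnC (_ : m - (m - j.+1).+1 = j) //.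
by have := ltn_ord j; lia.
Qed.

Lemma gtree2 m c : 0 < c -> gtree 2 m c = 2 ^ m.
Proof.
elim: m c => [|m IH] c c0 //=; rewrite (_ : minn c.+1 2 = 2); last by lia.
by rewrite !big_ord_recr big_ord0 /= !IH // expnS mul2n addnn.
Qed.

Lemma gtree3_rec m : gtree 3 m.+3 0 + gtree 3 m.+1 0 = 3 * gtree 3 m.+2 0.
Proof.
have step1 n : gtree 3 n.+1 1 = gtree 3 n 1 + gtree 3 n 2.
  by rewrite /= !big_ord_recr big_ord0.
have step2 n : gtree 3 n.+1 2 = gtree 3 n 1 + gtree 3 n 2 + gtree 3 n 2.
  by rewrite /= !big_ord_recr big_ord0 /= (_ : gtree 3 n 3 = gtree 3 n 2) //; case: n.
by rewrite !gtree_succ0 // !step1 step2; lia.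
Qed.

Lemma gtree3_small : gtree 3 1 0 = 1 /\ gtree 3 2 0 = 2.
Proof. by rewrite !gtree_succ0 //= !big_ord_recr big_ord0. Qed.

Import GRing.Theory.
Local Open Scope ring_scope.

Lemma gf_gtree k n : (0 < k)%N -> gf k n = (gtree k n 0)%:Z.
Proof. by move=> k0; rewrite /gf av_gtree. Qed.

Lemma fps_mulX g t : fps_mul fps_X g t = if t is t'.+1 then g t' else 0.
Proof.
rewrite /fps_mul; case: t => [|t]; first by rewrite big_ord1 mul0r.
rewrite !big_ord_recl /fps_X /= mul0r mul1r add0r subn1 big1 ?addr0 // => i _.
by rewrite mul0r.
Qed.

Lemma fps_mul_deg2 (f c : fps) n : (forall t, (3 <= t)%N -> c t = 0) ->
  fps_mul f c n.+2 = f n.+2 * c 0%N + f n.+1 * c 1%N + f n * c 2%N.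
Proof.
move=> c3; rewrite /fps_mul !big_ord_recr big1 ?add0r => [|i _]; last first.
  by rewrite c3 ?mulr0 //=; have := ltn_ord i; lia.
rewrite /= add0r subnn subSnn (_ : (n.+2 - n = 2)%N); last by lia.
by rewrite addrC (addrC (f n * _)) addrA.
Qed.

Lemma gf2_rational :
  fps_mul (gf 2) (fps_sub (fps_const 1) (fps_scale 2 fps_X)) = fps_sub (fps_const 1) fps_X.
Proof.
apply: functional_extensionality => -[|[|m]].
- by rewrite /fps_mul big_ord1 gf_gtree.
- by rewrite /fps_mul !big_ord_recr big_ord0 /= !gf_gtree // gtree_succ0 // gtree2.
rewrite fps_mul_deg2; last by case=> [|[|[|t]]].
rewrite /fps_sub /fps_scale /fps_const /fps_X /= !(mulr0, subrr, addr0) !gf_gtree //.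
by rewrite !gtree_succ0 // !gtree2 // expnS PoszM; lia.
Qed.

Lemma gf_succ k : (3 <= k)%N ->
  fps_mul (gf k) (fps_sub (fps_const 1) (fps_mul fps_X (gf k.-1))) = fps_const 1.
Proof.
move=> k3; have k0 : (0 < k)%N by lia.
have k'0 : (0 < k.-1)%N by lia.
apply: functional_extensionality => -[|m]; rewrite {1}/fps_mul.
  by rewrite big_ord1 /fps_sub /fps_const fps_mulX /= gf_gtree.
have term (i : 'I_m.+1) :
    gf k i * fps_sub (fps_const 1) (fps_mul fps_X (gf k.-1)) (m.+1 - i)%N
    = - ((gtree k i 0)%:Z * (gtree k.-1 (m - i) 0)%:Z).
  by rewrite /fps_sub /fps_const (@subSn i m (ltn_ord i)) fps_mulX !gf_gtree // sub0r mulrN.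
rewrite big_ord_recr (eq_bigr _ (fun i _ => term i)) sumrN /= subnn.
rewrite /fps_sub /fps_const fps_mulX subr0 mulr1 gf_gtree // gtree_succ_conv; last by lia.
by rewrite (big_morph Posz PoszD erefl) addNr.
Qed.

Lemma gf3_rational :
  fps_mul (gf 3) (fps_add (fps_sub (fps_const 1) (fps_scale 3 fps_X)) (fps_mul fps_X fps_X))
  = fps_sub (fps_const 1) (fps_scale 2 fps_X).
Proof.
have [g1 g2] := gtree3_small.
apply: functional_extensionality => -[|[|m]].
- by rewrite {1}/fps_mul big_ord1 /fps_add /fps_sub /fps_scale /fps_const fps_mulX gf_gtree.
- rewrite {1}/fps_mul !big_ord_recr big_ord0 /fps_add /fps_sub /fps_scale /fps_const.
  by rewrite !fps_mulX /fps_X /= !gf_gtree // g1.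
rewrite fps_mul_deg2; last first.
  by move=> [|[|[|t]]] //= _; rewrite /fps_add /fps_sub /fps_scale /fps_const fps_mulX.
rewrite /fps_add /fps_sub /fps_scale /fps_const !fps_mulX /fps_X /= !gf_gtree //.
case: m => [|m]; first by rewrite g1 g2.
by have := gtree3_rec m; lia.
Qed.

Lemma av3_rec : av 3 0 = 1%N /\ av 3 1 = 1%N /\ av 3 2 = 2%N /\
  forall n : nat, (3 <= n)%N -> (av 3 n)%:Z = 3 * (av 3 n.-1)%:Z - (av 3 n.-2)%:Z.
Proof.
have [g1 g2] := gtree3_small.
rewrite !av_gtree // g1 g2; do 3!split => //.
case=> [|[|[|m]]] // _; rewrite (_ : m.+3.-1 = m.+2) // (_ : m.+3.-2 = m.+1) //.
by rewrite !av_gtree //; have := gtree3_rec m; lia.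
Qed.

Theorem mainTheorem3 :
  fps_mul (gf 2) (fps_sub (fps_const 1) (fps_scale 2 fps_X))
    = fps_sub (fps_const 1) fps_X /\
  (forall k : nat, (3 <= k)%N ->
     fps_mul (gf k) (fps_sub (fps_const 1) (fps_mul fps_X (gf k.-1)))
       = fps_const 1) /\
  fps_mul (gf 3)
    (fps_add (fps_sub (fps_const 1) (fps_scale 3 fps_X)) (fps_mul fps_X fps_X))
    = fps_sub (fps_const 1) (fps_scale 2 fps_X) /\
  (av 3 0 = 1%N /\ av 3 1 = 1%N /\ av 3 2 = 2%N /\
   forall n : nat, (3 <= n)%N ->
     (av 3 n)%:Z = 3 * (av 3 n.-1)%:Z - (av 3 n.-2)%:Z).
Proof.
split; first exact: gf2_rational.
split; first exact: gf_succ.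
split; first exact: gf3_rational.
exact: av3_rec.
Qed.
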